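(* Let $q$ be an acyclic Boolean conjunctive query. If the attack graph of $q$ contains a strong cycle, then it contains a strong cycle of length $2$.
   Context: Atoms $R(s_1,\dots,s_n)$ have variables or constants as arguments; each relation name has a signature $[n,k]$ with primary key positions $1,\dots,k$. $\mathit{key}(F)$ is the set of variables in the primary-key positions of atom $F$, $\mathit{vars}(F)$ the set of variables of $F$. A Boolean conjunctive query $q$ is a finite set of atoms; $\mathit{vars}(q)$ its variables. A join tree for $q$ is an undirected tree on the atoms of $q$ such that whenever a variable occurs in atoms $F$ and $G$ it occurs in every atom on the path between them; the edge between $F$ and $G$ is labeled $\mathit{vars}(F)\cap\mathit{vars}(G)$. $q$ is acyclic if it has a join tree. $\mathit{FD}(q)=\{\mathit{key}(F)\to\mathit{vars}(F)\mid F\in q\}$ (functional dependencies over variables); $F^{+,q}=\{x\in\mathit{vars}(q)\mid \mathit{FD}(q\setminus\{F\})\models\mathit{key}(F)\to x\}$; $F^{\oplus,q}=\{x\in\mathit{vars}(q)\mid \mathit{FD}(q)\models\mathit{key}(F)\to x\}$. The attack graph of $q$, computed from any join tree $\tau$ (independent of the choice), has an edge (attack) $F\to G$ for distinct atoms iff every label $L$ on the path between $F$ and $G$ in $\tau$ satisfies $L\not\subseteq F^{+,q}$. An attack $F\to G$ is weak if $\mathit{key}(G)\subseteq F^{\oplus,q}$ and strong otherwise. A cycle of length $n$ is a sequence of attacks $F_0\to F_1\to\dots\to F_{n-1}\to F_0$ with pairwise distinct $F_i$; it is strong if at least one of its attacks is strong. *)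

From mathcomp Require Import all_boot.
From Stdlib Require List.

Set Implicit Arguments.
Unset Strict Implicit.
Unset Printing Implicit Defensive.

Section CQ.

(* V: variables, C: constants, Rel: relation names with signature
   [arity r, keylen r]. *)
Variables (V C Rel : Type) (arity keylen : Rel -> nat).

Inductive term : Type := TVar of V | TConst of C.

Record atom : Type := mkAtom { a_rel : Rel; a_args : seq term }.

Definition wf_atom (F : atom) : Prop :=
  size (a_args F) = arity (a_rel F) /\ 1 <= keylen (a_rel F) <= arity (a_rel F).

Definition key (F : atom) (x : V) : Prop :=
  exists i, i < keylen (a_rel F) /\ List.nth_error (a_args F) i = Some (TVar x).

Definition vars (F : atom) (x : V) : Prop := List.In (TVar x) (a_args F).

(* A Boolean conjunctive query is a finite set of atoms, represented by an
   injective enumeration q : 'I_n -> atom. *)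
Variables (n : nat) (q : 'I_n -> atom).

Definition vars_q (x : V) : Prop := exists i, vars (q i) x.

Definition fd_sat (D : Type) (I : (V -> D) -> Prop) (X Y : V -> Prop) : Prop :=
  forall t1 t2 : V -> D, I t1 -> I t2 ->
    (forall x, X x -> t1 x = t2 x) -> forall y, Y y -> t1 y = t2 y.

(* FD(S) |= X -> y, where S selects the atoms of a subquery and
   FD(S) = { key(F) -> vars(F) | F in S } (logical implication) *)
Definition fd_entails (S : 'I_n -> Prop) (X : V -> Prop) (y : V) : Prop :=
  forall (D : Type) (I : (V -> D) -> Prop),
    (forall i, S i -> fd_sat I (key (q i)) (vars (q i))) ->
    fd_sat I X (fun z => z = y).

Definition plus_q (F : 'I_n) (x : V) : Prop :=
  vars_q x /\ fd_entails (fun j => j <> F) (key (q F)) x.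

Definition oplus_q (F : 'I_n) (x : V) : Prop :=
  vars_q x /\ fd_entails (fun _ => True) (key (q F)) x.

Variable tau : rel 'I_n.  (* edge relation of an undirected graph on the atoms *)

Definition spath (F : 'I_n) (p : seq 'I_n) (G : 'I_n) : Prop :=
  path tau F p /\ last F p = G /\ uniq (F :: p).

Definition is_tree : Prop :=
  (forall x y, tau x y = tau y x) /\ (forall x, ~~ tau x x) /\
  (forall F G, exists p, spath F p G /\ forall p', spath F p' G -> p' = p).

Definition join_tree : Prop :=
  is_tree /\
  forall F G p, spath F p G -> forall x, vars (q F) x -> vars (q G) x ->
    forall H, H \in F :: p -> vars (q H) x.

Definition label (F G : 'I_n) (x : V) : Prop := vars (q F) x /\ vars (q G) x.

Fixpoint edges_ok (P : 'I_n -> 'I_n -> Prop) (x : 'I_n) (p : seq 'I_n) : Prop :=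
  if p is y :: p' then P x y /\ edges_ok P y p' else True.

Definition attack (F G : 'I_n) : Prop :=
  F <> G /\
  exists p, spath F p G /\
    edges_ok (fun H H' => ~ (forall x, label H H' x -> plus_q F x)) F p.

Definition weak_attack (F G : 'I_n) : Prop :=
  attack F G /\ forall x, key (q G) x -> oplus_q F x.

Definition strong_attack (F G : 'I_n) : Prop :=
  attack F G /\ ~ (forall x, key (q G) x -> oplus_q F x).

Definition is_cycle (c : seq 'I_n) : Prop :=
  0 < size c /\ uniq c /\
  forall i (x0 : 'I_n), i < size c ->
    attack (nth x0 c i) (nth x0 c (i.+1 %% size c)).

Definition strong_cycle (c : seq 'I_n) : Prop :=
  is_cycle c /\
  exists i (x0 : 'I_n), i < size c /\
    strong_attack (nth x0 c i) (nth x0 c (i.+1 %% size c)).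

End CQ.

From mathcomp Require Import all_boot.
From Stdlib Require Import Classical ClassicalEpsilon.
From Stdlib Require List.

Set Implicit Arguments.
Unset Strict Implicit.
Unset Printing Implicit Defensive.

(* The heart of the argument is a transitivity property of the attack graph:
   if F ~> G and G ~> H then F ~> H or G ~> F.  To see it, suppose G does not
   attack F; then the tree path from G to F has an edge u-v whose label lies
   in G^+.  Cutting that edge separates F from G, every variable shared across
   the cut lies in the label of u-v, and an induction along the FD closure
   shows that every variable of F^+ occurring on G's side already lies in G^+.
   So the edges of the attack path from G to H, which all stay on G's side,
   keep their labels outside F^+, and F ~> H.
   Given a cycle with a strong attack a0 ~> a1 ~> a2 ~> ..., transitivity
   either shortens the cycle or produces a 2-cycle through a1; if that
   2-cycle is weak, chaining weak attacks shows that a0 ~> a2 is strong, and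
   the shorter cycle a0 ~> a2 ~> ... is used instead. *)

Definition asbool (P : Prop) : bool :=
  if excluded_middle_informative P then true else false.

Lemma asboolP P : reflect P (asbool P).
Proof. by rewrite /asbool; case: excluded_middle_informative => h; constructor. Qed.

Lemma path_rev_sym (T : Type) (e : rel T) : (forall x y, e x y = e y x) ->
  forall p x, path e x p -> exists p', path e (last x p) p' /\ last (last x p) p' = x.
Proof.
move=> e_sym; elim=> [|y p IH] x /=; first by exists [::].
case/andP=> exy /IH [p' [p'_path p'_last]]; exists (rcons p' x).
by rewrite rcons_path p'_path p'_last e_sym exy last_rcons.
Qed.

Lemma path_split_fail (T : Type) (e1 e2 : rel T) p x :
  path e1 x p -> ~~ path e2 x p ->
  exists a v b, p = a ++ v :: b /\ e1 (last x a) v /\ ~~ e2 (last x a) v.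
Proof.
elim: p x => [|y p IH] x //= /andP[e1xy e1p]; case e2xy: (e2 x y) => /= e2p.
  have [a [v [b [-> e12]]]] := IH y e1p e2p.
  by exists (y :: a), v, b.
by exists [::], y, p; rewrite /= e1xy e2xy.
Qed.

Section CycleWalk.
Variables (N : nat) (R : 'I_N -> 'I_N -> Prop) (c : seq 'I_N) (x0 : 'I_N).
Hypothesis c_gt0 : 0 < size c.
Hypothesis c_edges : forall i, i < size c -> R (nth x0 c i) (nth x0 c (i.+1 %% size c)).

Lemma cycle_return_walk i : i < size c ->
  exists s, edges_ok R (nth x0 c (i.+1 %% size c)) s /\
            last (nth x0 c (i.+1 %% size c)) s = nth x0 c i.
Proof.
move=> lt_i; have m_gt0 := c_gt0; set m := size c in lt_i m_gt0 *.
pose f j := nth x0 c ((i + j) %% m).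
have f_edges j : R (f j) (f j.+1).
  rewrite /f; have <- : ((i + j) %% m).+1 %% m = (i + j.+1) %% m.
    by rewrite addnS -addn1 modnDml addn1.
  exact: c_edges (ltn_pmod _ m_gt0).
have walk_edges k j : edges_ok R (f j) (map f (iota j.+1 k)).
  by elim: k j => [|k IHk] j //=.
have walk_last k j : last (f j) (map f (iota j.+1 k)) = f (j + k).
  by elim: k j => [|k IHk] j /=; [rewrite addn0 | rewrite IHk addSnnS].
have f1 : f 1 = nth x0 c (i.+1 %% m) by rewrite /f addn1.
exists (map f (iota 2 (m - 1))); rewrite -f1 walk_last; split; first exact: walk_edges.
by rewrite subnKC // /f modnDr modn_small.
Qed.

End CycleWalk.

Section Attacks.
Variables (V C Rel : Type) (keylen : Rel -> nat) (n : nat)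
  (q : 'I_n -> atom V C Rel) (tau : rel 'I_n).

Local Notation entails := (fd_entails keylen q).
Local Notation plus := (plus_q keylen q).
Local Notation oplus := (oplus_q keylen q).
Local Notation "F ~> G" := (attack keylen q tau F G) (at level 70).
Local Notation strong := (strong_attack keylen q tau).

(* key(F) ->+ z in FD(q \ {F}); thus F^{+,q} = vars(q) /\ key_closure F. *)
Definition key_closure (F : 'I_n) : V -> Prop :=
  entails (fun j => j <> F) (key keylen (q F)).

Lemma fd_entails_refl S X y : X y -> entails S X y.
Proof. by move=> Xy D I HI t1 t2 I1 I2 agree z ->; exact: agree. Qed.

Lemma fd_entails_step S X K : S K ->
  (forall z, key keylen (q K) z -> entails S X z) ->
  forall y, vars (q K) y -> entails S X y.
Proof.
move=> SK keyK y Ky D I HI t1 t2 I1 I2 agree z ->.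
apply: (HI K SK t1 t2 I1 I2) => // x kx.
exact: (keyK x kx D I HI t1 t2 I1 I2 agree x).
Qed.

Lemma fd_entails_trans S X Y y :
  (forall x, Y x -> entails S X x) -> entails S Y y -> entails S X y.
Proof.
move=> XY Yy D I HI t1 t2 I1 I2 agree z ->.
apply: (Yy D I HI t1 t2 I1 I2) => // x Yx.
exact: (XY x Yx D I HI t1 t2 I1 I2 agree x).
Qed.

(* The two-tuple instance {const true, asbool \o Z} satisfies every FD of S
   because Z is closed under them; applying the entailment to it puts y in Z. *)
Lemma fd_entails_closed S X (Z : V -> Prop) y : entails S X y ->
  (forall x, X x -> Z x) ->
  (forall K, S K -> (forall x, key keylen (q K) x -> Z x) ->
     forall z, vars (q K) z -> Z z) -> Z y.
Proof.
move=> Xy XZ Z_closed.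
pose t1 := fun _ : V => true; pose t2 := fun x => asbool (Z x).
pose I := fun t => t = t1 \/ t = t2.
have I_sat K : S K -> fd_sat I (key keylen (q K)) (vars (q K)).
  move=> SK u1 u2 [->|->] [->|->] agree z Kz //; rewrite /t1 /t2.
  - apply/esym/asboolP; apply: (Z_closed K SK) => // x kx.
    by apply/asboolP; move: (agree x kx); rewrite /t1 /t2 => <-.
  - apply/asboolP; apply: (Z_closed K SK) => // x kx.
    by apply/asboolP; move: (agree x kx); rewrite /t1 /t2 => ->.
suff /asboolP : t2 y by [].
rewrite -(Xy bool I I_sat t1 t2 (or_introl erefl) (or_intror erefl)) //.
by move=> x Xx; apply/esym/asboolP; exact: XZ.
Qed.

Lemma oplus_key_trans F G H :
  (forall x, key keylen (q G) x -> oplus F x) ->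
  (forall x, key keylen (q H) x -> oplus G x) ->
  (forall x, key keylen (q H) x -> oplus F x).
Proof.
move=> FG GH x kx; have [x_q Gx] := GH x kx; split => //.
by apply: fd_entails_trans Gx => y ky; exact: (FG y ky).2.
Qed.

Lemma key_vars (A : atom V C Rel) z : key keylen A z -> vars A z.
Proof. by case=> i [_ h]; exact: List.nth_error_In h. Qed.

Section JoinTree.
Hypothesis jt : join_tree q tau.

Definition attack_edge F : rel 'I_n := fun x y =>
  tau x y && asbool (~ (forall z, label q x y z -> plus F z)).

Lemma tau_sym x y : tau x y = tau y x.
Proof. by case: jt => [[]]. Qed.

Lemma attack_edge_sym F x y : attack_edge F x y = attack_edge F y x.
Proof.
rewrite /attack_edge tau_sym; congr (_ && _).
by apply/asboolP/asboolP => h1 h2; apply: h1 => z [a b]; exact: h2.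
Qed.

Lemma path_of_edges_ok (P : 'I_n -> 'I_n -> Prop) x p :
  path tau x p -> edges_ok P x p -> path (fun a b => tau a b && asbool (P a b)) x p.
Proof.
elim: p x => [|y p IH] x //= /andP[xy p_path] [Pxy p_edges].
by rewrite xy; apply/andP; split; [apply/asboolP | exact: IH].
Qed.

Lemma edges_ok_of_path (P : 'I_n -> 'I_n -> Prop) x p :
  path (fun a b => tau a b && asbool (P a b)) x p -> edges_ok P x p.
Proof.
by elim: p x => [|y p IH] x //= /andP[/andP[_ /asboolP Pxy] /IH].
Qed.

Lemma attack_spath F G : F ~> G ->
  exists p, spath tau F p G /\ path (attack_edge F) F p.
Proof.
case=> _ [p [sp p_edges]]; exists p; split => //.
by apply: path_of_edges_ok p_edges; case: sp.
Qed.

Lemma attack_of_walk F G w : F <> G -> path (attack_edge F) F w -> last F w = G ->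
  F ~> G.
Proof.
move=> FG w_path w_last; rewrite -w_last in FG *; move: FG.
case: (shortenP w_path) => p p_path p_uniq _ FG.
split => //; exists p; split; last exact: edges_ok_of_path.
by split; [apply: sub_path p_path => a b /andP[] | ].
Qed.

Lemma attack_key_not_closure F G : F ~> G ->
  ~ (forall z, key keylen (q G) z -> key_closure F z).
Proof.
move=> aFG keyG; have FG := aFG.1.
have [p [[_ [p_last _]] p_edges]] := attack_spath aFG.
have varsG : forall y, vars (q G) y -> key_closure F y.
  by apply: fd_entails_step => // e; apply: FG.
case/lastP: p p_last p_edges => [/= e _|p y]; first by apply: FG.
rewrite last_rcons rcons_path => -> /andP[_ /andP[_ /asboolP]]; apply => z [_ Gz].
by split; [exists G | exact: varsG].
Qed.

Section Cut.
Variables u v : 'I_n.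

Definition cut_edge : rel 'I_n := fun x y =>
  tau x y && ~~ ((x == u) && (y == v) || (x == v) && (y == u)).

Definition cut_side G K := exists w, path cut_edge G w /\ last G w = K.

Lemma cut_edge_sym x y : cut_edge x y = cut_edge y x.
Proof.
rewrite /cut_edge tau_sym; congr (_ && ~~ _).
by rewrite orbC (andbC (x == v)) (andbC (x == u)).
Qed.

Lemma spath_cut_not_side F G a b : spath tau F (a ++ v :: b) G -> u = last F a ->
  ~ cut_side G F.
Proof.
move=> sp eu [w [w_path w_last]].
have [w' [w'_path w'_last]] := path_rev_sym cut_edge_sym w_path.
rewrite w_last in w'_path w'_last.
case: (shortenP w'_path) w'_last => p p_path p_uniq _ p_last.
have sp' : spath tau F p G.
  by split; [apply: sub_path p_path => c d /andP[] | ].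
have [p0 [_ p0_uniq]] := jt.1.2.2 F G.
have : path cut_edge F (a ++ v :: b) by rewrite (p0_uniq _ sp) -(p0_uniq _ sp').
by rewrite cat_path /= => /andP[_ /andP[]]; rewrite /cut_edge -eu !eqxx andbF.
Qed.

(* The tree path from an atom on G's side to one off it crosses u-v, and by
   connectedness every atom on it, in particular u and v, contains z. *)
Lemma cut_side_label G K1 K2 z : ~ cut_side G K1 -> cut_side G K2 ->
  vars (q K1) z -> vars (q K2) z -> label q u v z.
Proof.
move=> K1_off [w [w_path w_last]] K1z K2z.
have [p [sp _]] := jt.1.2.2 K2 K1; have [p_path [p_last _]] := sp.
have [p_cut|p_uncut] := boolP (path cut_edge K2 p).
  case: K1_off; exists (w ++ p).
  by rewrite cat_path last_cat w_last w_path p_cut p_last.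
have [a [y [b [ep [xy not_cut]]]]] := path_split_fail p_path p_uncut.
have onp := jt.2 K2 K1 _ sp z K2z K1z; rewrite ep in onp.
have xz : vars (q (last K2 a)) z by apply: onp; rewrite -cat_cons mem_cat mem_last.
have yz : vars (q y) z by apply: onp; rewrite -cat_cons mem_cat mem_head orbT.
move: not_cut; rewrite /cut_edge xy negbK.
by case/orP=> /andP[/eqP ex /eqP ey]; split; rewrite -?ex -?ey.
Qed.

Section Transfer.
Variables F G : 'I_n.
Hypothesis aFG : F ~> G.
Hypothesis F_off : ~ cut_side G F.
Hypothesis uv_plus : forall z, label q u v z -> plus G z.

(* Closedness along the FD closure of key(F): an atom K on G's side whose key
   is in G^+ contributes its variables to G^+, since K <> G by aFG. *)
Lemma key_closure_plus_on_side z : key_closure F z ->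
  (exists K, cut_side G K /\ vars (q K) z) -> plus G z.
Proof.
move=> Fz.
pose Z z := key_closure F z /\ ((exists K, cut_side G K /\ vars (q K) z) -> plus G z).
suff [] : Z z by [].
apply: (fd_entails_closed (Z:=Z) Fz).
  move=> x kx; split; first exact: fd_entails_refl.
  by case=> K [sK Kx]; apply: uv_plus; exact: cut_side_label F_off sK (key_vars kx) Kx.
move=> K KF keyK y Ky; split.
  by apply: (fd_entails_step KF) => // x /keyK[].
case=> K2 [sK2 K2y].
have [sK|sK] := classic (cut_side G K); last first.
  by apply: uv_plus; exact: cut_side_label sK sK2 Ky K2y.
have KG : K <> G.
  by move=> eKG; apply: (attack_key_not_closure aFG) => x; rewrite -eKG => /keyK[].
have keyK_plus x : key keylen (q K) x -> plus G x.
  by move=> kx; apply: (keyK x kx).2; exists K; split => //; exact: key_vars.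
split; first by exists K.
by apply: (fd_entails_step (S:=fun j => j <> G) KG) => // x /keyK_plus[].
Qed.

End Transfer.

Lemma attack_path_cut G w : (forall z, label q u v z -> plus G z) ->
  path (attack_edge G) G w -> path cut_edge G w.
Proof.
move=> uv_plus; apply: sub_path => c d /andP[cd /asboolP Lcd].
rewrite /cut_edge cd /=; apply/negP => /orP[] /andP[/eqP ec /eqP ed];
  by apply: Lcd => z [cz dz]; apply: uv_plus; split; rewrite -?ec -?ed.
Qed.

End Cut.

Lemma attack_trans_or_back F G H : F ~> G -> G ~> H -> F ~> H \/ G ~> F.
Proof.
move=> aFG aGH; have [|nGF] := classic (G ~> F); [by right | left].
have FH : F <> H by move=> eFH; rewrite eFH in nGF.
have [p1 [sp1 p1_attack]] := attack_spath aFG; have [p1_path [p1_last _]] := sp1.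
have p1_notG : ~~ path (attack_edge G) F p1.
  apply/negP => h; have [p [p_path p_last]] := path_rev_sym (attack_edge_sym G) h.
  rewrite p1_last in p_path p_last; apply: nGF; apply: attack_of_walk p_path p_last.
  by move=> e; apply: aFG.1.
have [a [v [b [ep1 [uv nuv]]]]] := path_split_fail p1_path p1_notG.
set u := last F a in uv nuv.
have uv_plus : forall z, label q u v z -> plus G z.
  by apply: NNPP => Luv; case/negP: nuv; rewrite /attack_edge uv; apply/asboolP.
have sp1' : spath tau F (a ++ v :: b) G by rewrite -ep1.
have F_off : ~ cut_side u v G F := spath_cut_not_side sp1' erefl.
apply: NNPP => nFH.
have [p2 [[_ [p2_last _]] p2_attack]] := attack_spath aGH.
have p2_notF : ~~ path (attack_edge F) G p2.
  apply/negP => h; apply: nFH; apply: (attack_of_walk (w := p1 ++ p2)) => //.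
    by rewrite cat_path p1_attack p1_last h.
  by rewrite last_cat p1_last.
have [a2 [y [b2 [ep2 [xy nxy]]]]] := path_split_fail p2_attack p2_notF.
set x := last G a2 in xy nxy.
have x_side : cut_side u v G x.
  exists a2; split => //; apply: attack_path_cut uv_plus _.
  by move: p2_attack; rewrite ep2 cat_path => /andP[].
have xy_F : forall z, label q x y z -> plus F z.
  apply: NNPP => Lxy; case/negP: nxy.
  by rewrite /attack_edge (andP xy).1; apply/asboolP.
case/andP: xy => _ /asboolP; apply => z xyz.
apply: (key_closure_plus_on_side aFG F_off uv_plus (xy_F z xyz).2).
by exists x; split => //; case: xyz.
Qed.

Lemma strong_walk_two_cycle s a0 a1 : strong a0 a1 ->
  edges_ok (attack keylen q tau) a1 s -> last a1 s = a0 ->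
  exists F G, strong F G /\ G ~> F.
Proof.
have [N] := ubnP (size s); elim: N s a0 a1 => // N IH [|a2 s] a0 a1 /= size_s s01.
  by move=> _ e; case: s01.1.1; rewrite e.
case: s size_s => [|a3 s] /= size_s [a12 edges] last_s.
  by exists a0, a1; split => //; rewrite -last_s.
case: edges => a23 edges.
have [a13|a21] := attack_trans_or_back a12 a23; first exact: (IH (a3 :: s) a0 a1).
have [|weak21] := classic (strong a2 a1); first by exists a2, a1.
have [a02|a10] := attack_trans_or_back s01.1 a12; last by exists a0, a1.
have [st02|weak02] := classic (strong a0 a2); first exact: (IH (a3 :: s) a0 a2).
have key21 : forall x, key keylen (q a1) x -> oplus a2 x.
  by apply: NNPP => h; apply: weak21.
have key02 : forall x, key keylen (q a2) x -> oplus a0 x.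
  by apply: NNPP => h; apply: weak02.
by case: s01.2; exact: oplus_key_trans key02 key21.
Qed.

End JoinTree.

Lemma two_cycle_strong F G : strong F G -> G ~> F ->
  strong_cycle keylen q tau [:: F; G].
Proof.
move=> sFG aGF; split; last by exists 0, F; split.
split=> //; split; first by rewrite /= inE andbT; apply/eqP; exact: sFG.1.1.
by move=> [|[|i]] x0 //= _; first [exact: sFG.1 | exact: aGF].
Qed.

End Attacks.

Theorem lemma4 (V C Rel : Type) (arity keylen : Rel -> nat)
  (n : nat) (q : 'I_n -> atom V C Rel) (tau : rel 'I_n) :
  injective q ->
  (forall i, wf_atom arity keylen (q i)) ->
  join_tree q tau ->
  (exists c, strong_cycle keylen q tau c) ->
  exists c, strong_cycle keylen q tau c /\ size c = 2.
Proof.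
move=> _ _ jt [c [[c_gt0 [_ c_attack]] [i [x0 [lt_i st]]]]].
have [s [s_attack s_last]] := cycle_return_walk c_gt0 (c_attack ^~ x0) lt_i.
have [F [G [sFG aGF]]] := strong_walk_two_cycle jt st s_attack s_last.
by exists [:: F; G]; split => //; exact: two_cycle_strong.
Qed.
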